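(* Let $s\ge2$ and $1=a_1\le a_2\le\dots\le a_s$ with at least one of $a_2,\dots,a_s$ greater than $1$. Define $c_i=1-a_i^{-1}$ for $2\le i\le s$, $M_j=\tfrac12(c_2^j+\dots+c_s^j)$ for $j\ge1$, $$p_0=\prod_{i=2}^s a_i^{-1/2},\qquad p_j=\frac1j\sum_{i=0}^{j-1}M_{j-i}\,p_i\ \ (j\ge1),$$ and $W_i=\sum_{j=0}^i p_j$. Then all $p_j>0$ and, for every $i\ge1$, $$\frac{(i+1)p_{i+1}}{i\,p_i}\le\frac{W_i}{W_{i-1}}.$$ *)

From Stdlib Require Import Reals List.
Import ListNotations.
Open Scope R_scope.

(* sum_{i=m}^{n} f i  (empty if n < m) *)
Definition rsum (m n : nat) (f : nat -> R) : R :=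
  fold_right Rplus 0 (map f (seq m (S n - m))).
Definition rprod (m n : nat) (f : nat -> R) : R :=
  fold_right Rmult 1 (map f (seq m (S n - m))).

Section Seqs.
Variables (s : nat) (a : nat -> R).

Definition cc (i : nat) : R := 1 - / a i.
Definition MM (j : nat) : R := / 2 * rsum 2 s (fun i => cc i ^ j).
Definition p0 : R := rprod 2 s (fun i => Rpower (a i) (- (1/2))).

(* pl n = [p_0; ...; p_n] *)
Fixpoint pl (n : nat) : list R :=
  match n with
  | O => [p0]
  | S k => pl k ++
           [ / INR (S k) * rsum 0 k (fun i => MM (S k - i) * nth i (pl k) 0) ]
  end.

Definition pp (j : nat) : R := nth j (pl j) 0.
Definition WW (i : nat) : R := rsum 0 i pp.
End Seqs.

From Stdlib Require Import Reals List Lra Lia Psatz.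
Open Scope R_scope.

(* Writing h d = M_{d+1}, the recurrence reads
     (n+1) p_{n+1} = Phi_n := sum_{k=0}^n h(n-k) p_k,
   a convolution of p with the nonincreasing sequence h (the c_i lie in
   [0,1], so c_i^j decreases in j).  Because W_i > 0, the claim is the cross
   inequality Phi_{n+1} W_n <= Phi_n W_{n+1}.  For ANY positive p and ANY
   nonincreasing h this inequality at n follows (induction on n, shifting h)
   from the log-concavity W_m W_{m+2} <= W_{m+1}^2 for all m < n; when
   moreover (n+1) p_{n+1} = Phi_n, the cross inequality at m conversely
   yields log-concavity at m.  Both facts together close an induction. *)

Lemma fold_right_Rplus_shift (l : list R) (z : R) :
  fold_right Rplus z l = fold_right Rplus 0 l + z.
Proof. induction l as [|x l IH]; simpl; [lra | rewrite IH; lra]. Qed.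

Lemma rsum_from_0 (n : nat) (f : nat -> R) : rsum 0 n f = sum_f_R0 f n.
Proof.
  unfold rsum. rewrite Nat.sub_0_r.
  induction n as [|n IH]; [simpl; lra|].
  rewrite seq_S, map_app, fold_right_app, fold_right_Rplus_shift, IH. simpl. lra.
Qed.

Lemma in_rsum_range (m n i : nat) : In i (seq m (S n - m)) -> (m <= i <= n)%nat.
Proof. intros Hi. apply in_seq in Hi. lia. Qed.

Lemma rsum_le (m n : nat) (f g : nat -> R) :
  (forall i, (m <= i <= n)%nat -> f i <= g i) -> rsum m n f <= rsum m n g.
Proof.
  unfold rsum. intros H.
  assert (Hl : forall i, In i (seq m (S n - m)) -> f i <= g i)
    by (intros i Hi; apply H, in_rsum_range, Hi).
  clear H. induction (seq m (S n - m)) as [|x l IH]; simpl in *; [lra|].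
  assert (f x <= g x) by auto. assert (IHl := IH (fun i Hi => Hl i (or_intror Hi))). lra.
Qed.

Lemma sum_map_nonneg (f : nat -> R) (l : list nat) :
  (forall i, In i l -> 0 <= f i) -> 0 <= fold_right Rplus 0 (map f l).
Proof.
  induction l as [|x l IH]; simpl; intros H; [lra|].
  assert (0 <= f x) by auto. assert (0 <= fold_right Rplus 0 (map f l)) by auto. lra.
Qed.

Lemma rsum_pos (m n i0 : nat) (f : nat -> R) :
  (forall i, (m <= i <= n)%nat -> 0 <= f i) -> (m <= i0 <= n)%nat -> 0 < f i0 ->
  0 < rsum m n f.
Proof.
  unfold rsum. intros Hnn Hi0 Hf.
  assert (Hl : forall i, In i (seq m (S n - m)) -> 0 <= f i)
    by (intros i Hi; apply Hnn, in_rsum_range, Hi).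
  assert (Hin : In i0 (seq m (S n - m))) by (apply in_seq; lia).
  clear Hnn Hi0. induction (seq m (S n - m)) as [|x l IH]; simpl in *; [contradiction|].
  assert (Htail : 0 <= fold_right Rplus 0 (map f l)) by (apply sum_map_nonneg; auto).
  destruct Hin as [->|Hin]; [lra|].
  assert (0 <= f x) by auto. assert (0 < fold_right Rplus 0 (map f l)) by auto. lra.
Qed.

Lemma rprod_pos (m n : nat) (f : nat -> R) : (forall i, 0 < f i) -> 0 < rprod m n f.
Proof.
  intros H. unfold rprod.
  induction (seq m (S n - m)) as [|x l IH]; simpl; [lra | apply Rmult_lt_0_compat; auto].
Qed.

Definition conv (p h : nat -> R) (n : nat) : R :=
  sum_f_R0 (fun k => h (n - k)%nat * p k) n.

Lemma noninc_le_head (h : nat -> R) :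
  (forall d, h (S d) <= h d) -> forall d, h d <= h O.
Proof. intros H d. induction d as [|d IH]; [lra | specialize (H d); lra]. Qed.

(* Here W0, W1 = W0 + p1 and
   W2 = W1 + p2 are consecutive partial sums, A and B are the convolutions at
   n+1 and n with the shifted kernel, and h0 is the head of the kernel.  Using
   the hypothesis on A and B, the difference of the two sides is at least
   (h0 W1 - A) (W1^2 - W0 W2) / W1 >= 0. *)
Lemma cross_step (W0 p1 p2 A B h0 : R) :
  0 < W0 -> 0 < p1 -> 0 < p2 ->
  A * W0 <= B * (W0 + p1) ->
  W0 * (W0 + p1 + p2) <= (W0 + p1) * (W0 + p1) ->
  A <= h0 * (W0 + p1) ->
  (A + h0 * p2) * (W0 + p1) <= (B + h0 * p1) * (W0 + p1 + p2).
Proof.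
  intros HW0 Hp1 Hp2 HAB HG HA.
  assert (HW1 : 0 < W0 + p1) by lra.
  apply Rmult_le_reg_l with (W0 + p1); [exact HW1|].
  assert (HB : A * W0 * (W0 + p1 + p2) <= B * (W0 + p1) * (W0 + p1 + p2))
    by (apply Rmult_le_compat_r; lra).
  assert (Hprod : 0 <= (h0 * (W0 + p1) - A) * ((W0 + p1) * (W0 + p1) - W0 * (W0 + p1 + p2)))
    by (apply Rmult_le_pos; lra).
  nra.
Qed.

Section Convolution.
Variable p : nat -> R.
Hypothesis p_pos : forall k, 0 < p k.

Local Notation W := (sum_f_R0 p).

Lemma partial_sum_pos (n : nat) : 0 < W n.
Proof. apply tech1. intros k _. apply p_pos. Qed.

Lemma conv_S (h : nat -> R) (n : nat) :
  conv p h (S n) = conv p (fun d => h (S d)) n + h O * p (S n).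
Proof.
  unfold conv. rewrite tech5, Nat.sub_diag. f_equal.
  apply sum_eq. intros i Hi. rewrite Nat.sub_succ_l by lia. reflexivity.
Qed.

Lemma conv_le_partial_sum (h : nat -> R) (c : R) (n : nat) :
  (forall d, h d <= c) -> conv p h n <= c * W n.
Proof.
  intros Hh. unfold conv. rewrite scal_sum. apply sum_Rle. intros k _.
  specialize (p_pos k). specialize (Hh (n - k)%nat). nra.
Qed.

Lemma conv_cross_of_logconcave (n : nat) :
  (forall m, (m < n)%nat -> W m * W (S (S m)) <= W (S m) * W (S m)) ->
  forall h, (forall d, h (S d) <= h d) ->
  conv p h (S n) * W n <= conv p h n * W (S n).
Proof.
  induction n as [|n IH]; intros Hlc h Hh.
  - unfold conv. simpl. specialize (Hh O). pose proof (p_pos O). nra.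
  - rewrite (conv_S h (S n)), (conv_S h n).
    set (h' := fun d => h (S d)).
    assert (Hshift : conv p h' (S n) * W n <= conv p h' n * W (S n)).
    { apply IH; [intros m Hm; apply Hlc; lia | intros d; apply Hh]. }
    assert (Hbound : conv p h' (S n) <= h O * W (S n)).
    { apply conv_le_partial_sum. intros d. unfold h'. apply noninc_le_head. exact Hh. }
    pose proof (Hlc n (Nat.lt_succ_diag_r n)) as Hlcn.
    change (W (S (S n))) with (W (S n) + p (S (S n))) in *.
    change (W (S n)) with (W n + p (S n)) in *.
    apply cross_step; auto using partial_sum_pos.
Qed.

Lemma logconcave_of_conv_cross (h : nat -> R) (m : nat) :
  (forall n, INR (S n) * p (S n) = conv p h n) ->
  conv p h (S m) * W m <= conv p h m * W (S m) ->
  W m * W (S (S m)) <= W (S m) * W (S m).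
Proof.
  intros Hrec Hcross. rewrite <- !Hrec, (S_INR (S m)) in Hcross.
  change (W (S (S m))) with (W (S m) + p (S (S m))).
  change (W (S m)) with (W m + p (S m)) in *.
  pose proof (partial_sum_pos m). pose proof (p_pos (S m)). pose proof (p_pos (S (S m))).
  assert (0 < INR (S m)) by (apply lt_0_INR; lia).
  set (x := INR (S m)) in *.
  (* (x+1) p2 W_m <= x p1 W_{m+1} forces p2 W_m <= p1 W_{m+1} *)
  assert (Hx : x * (W m * p (S (S m))) <= x * (p (S m) * (W m + p (S m)))) by nra.
  apply Rmult_le_reg_l in Hx; [nra | lra].
Qed.

Theorem conv_cross (h : nat -> R) :
  (forall d, h (S d) <= h d) ->
  (forall n, INR (S n) * p (S n) = conv p h n) ->
  forall n, conv p h (S n) * W n <= conv p h n * W (S n).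
Proof.
  intros Hh Hrec.
  assert (Hall : forall N n, (n <= N)%nat -> conv p h (S n) * W n <= conv p h n * W (S n)).
  { induction N as [|N IH]; intros n Hn; apply conv_cross_of_logconcave; auto.
    - intros m Hm; lia.
    - intros m Hm. apply (logconcave_of_conv_cross h); auto. apply IH. lia. }
  intros n. apply (Hall n). lia.
Qed.

End Convolution.

Lemma pl_length (s : nat) (a : nat -> R) (k : nat) : length (pl s a k) = S k.
Proof. induction k as [|k IH]; simpl; auto. rewrite length_app, IH. simpl. lia. Qed.

Lemma pl_nth (s : nat) (a : nat -> R) (k i : nat) :
  (i <= k)%nat -> nth i (pl s a k) 0 = pp s a i.
Proof.
  induction k as [|k IH]; intros Hi.
  - replace i with O by lia. reflexivity.
  - destruct (Nat.eq_dec i (S k)) as [->|Hne]; [reflexivity|].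
    simpl. rewrite app_nth1 by (rewrite pl_length; lia). apply IH. lia.
Qed.

Lemma pp_conv (s : nat) (a : nat -> R) (k : nat) :
  INR (S k) * pp s a (S k) = conv (pp s a) (fun d => MM s a (S d)) k.
Proof.
  unfold pp at 1. cbn [pl]. rewrite app_nth2 by (rewrite pl_length; lia).
  rewrite pl_length, Nat.sub_diag. cbn [nth]. rewrite rsum_from_0.
  assert (Hk : INR (S k) <> 0) by (apply not_0_INR; lia).
  rewrite <- Rmult_assoc, (Rinv_r _ Hk), Rmult_1_l.
  unfold conv. apply sum_eq. intros i Hi.
  rewrite pl_nth, Nat.sub_succ_l by lia. reflexivity.
Qed.

Lemma pp_pos (s : nat) (a : nat -> R) :
  (forall j, 0 < MM s a (S j)) -> forall j, 0 < pp s a j.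
Proof.
  intros HM.
  assert (Hupto : forall n j, (j <= n)%nat -> 0 < pp s a j).
  { induction n as [|n IH]; intros j Hj.
    - replace j with O by lia. apply rprod_pos. intros i. apply exp_pos.
    - destruct (Nat.eq_dec j (S n)) as [->|Hne]; [|apply IH; lia].
      assert (Hconv : 0 < conv (pp s a) (fun d => MM s a (S d)) n).
      { apply tech1. intros k Hk. apply Rmult_lt_0_compat; [apply HM | apply IH; lia]. }
      rewrite <- pp_conv in Hconv.
      assert (0 < INR (S n)) by (apply lt_0_INR; lia). nra. }
  intros j. apply (Hupto j). lia.
Qed.

Section Coefficients.
Variables (s : nat) (a : nat -> R).
Hypothesis a_1 : a 1%nat = 1.
Hypothesis a_mono : forall i, (1 <= i)%nat -> (i < s)%nat -> a i <= a (S i).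

Lemma a_ge_1 (i : nat) : (1 <= i <= s)%nat -> 1 <= a i.
Proof.
  induction i as [|i IH]; intros Hi; [lia|].
  destruct (Nat.eq_dec i O) as [->|Hne]; [rewrite a_1; lra|].
  specialize (a_mono i ltac:(lia) ltac:(lia)). specialize (IH ltac:(lia)). lra.
Qed.

Lemma cc_range (i : nat) : (1 <= i <= s)%nat -> 0 <= cc a i <= 1.
Proof.
  intros Hi. pose proof (a_ge_1 i Hi) as Ha. unfold cc.
  assert (0 < / a i <= 1).
  { split; [apply Rinv_0_lt_compat; lra|].
    rewrite <- Rinv_1. apply Rinv_le_contravar; lra. }
  lra.
Qed.

(* Since 0 <= c_i <= 1, the powers c_i^j are nonincreasing in j. *)
Lemma MM_noninc (j : nat) : MM s a (S j) <= MM s a j.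
Proof.
  unfold MM. apply Rmult_le_compat_l; [lra|]. apply rsum_le. intros i Hi.
  pose proof (cc_range i ltac:(lia)) as Hc. simpl.
  pose proof (pow_le (cc a i) j ltac:(lra)). nra.
Qed.

(* A single a_i > 1 makes c_i > 0, hence every M_{j+1} positive. *)
Lemma MM_pos :
  (exists i, (2 <= i)%nat /\ (i <= s)%nat /\ 1 < a i) -> forall j, 0 < MM s a (S j).
Proof.
  intros [i0 [H2 [Hs Hgt]]] j. unfold MM. apply Rmult_lt_0_compat; [lra|].
  apply rsum_pos with i0; [| lia |].
  - intros i Hi. apply pow_le, cc_range. lia.
  - apply pow_lt. unfold cc.
    assert (/ a i0 < 1) by (rewrite <- Rinv_1; apply Rinv_lt_contravar; lra). lra.
Qed.

End Coefficients.

Lemma Rdiv_le_cross (x y u v : R) : 0 < y -> 0 < v -> x * v <= u * y -> x / y <= u / v.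
Proof.
  intros Hy Hv H. unfold Rdiv.
  apply Rmult_le_reg_r with (y * v); [nra|].
  replace (x * / y * (y * v)) with (x * v) by (field; lra).
  replace (u * / v * (y * v)) with (u * y) by (field; lra). lra.
Qed.

Theorem mainTheorem10 (s : nat) (a : nat -> R)
  (hs : (2 <= s)%nat)
  (ha1 : a 1%nat = 1)
  (hmono : forall i : nat, (1 <= i)%nat -> (i < s)%nat -> a i <= a (S i))
  (hgt : exists i : nat, (2 <= i)%nat /\ (i <= s)%nat /\ 1 < a i) :
  (forall j : nat, 0 < pp s a j) /\
  (forall i : nat, (1 <= i)%nat ->
     (INR (S i) * pp s a (S i)) / (INR i * pp s a i)
       <= WW s a i / WW s a (i - 1)).
Proof.
  assert (Hpos : forall j, 0 < pp s a j) by (apply pp_pos, MM_pos; auto).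
  split; [exact Hpos|].
  intros [|n] Hn; [lia|].
  unfold WW. rewrite !rsum_from_0. replace (S n - 1)%nat with n by lia.
  assert (Hcross := conv_cross (pp s a) Hpos (fun d => MM s a (S d))
                      (fun d => MM_noninc s a ha1 hmono (S d)) (pp_conv s a) n).
  rewrite <- !pp_conv in Hcross.
  apply Rdiv_le_cross.
  - apply Rmult_lt_0_compat; [apply lt_0_INR; lia | apply Hpos].
  - apply partial_sum_pos, Hpos.
  - rewrite (Rmult_comm (sum_f_R0 _ (S n))). exact Hcross.
Qed.
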